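(* Let $I$ be a nontrivial ideal of $\mathbb{N}\times\mathbb{N}$ containing all sets of the form $H\times\mathbb{N}$ with $H$ a finite subset of $\mathbb{N}$. If $(X,\tau)$ is a Lindelöf space in which every double sequence has an $I$-cluster point, then $(X,\tau)$ is compact.
   Context: An ideal $I$ on $\mathbb{N}\times\mathbb{N}$ is a family of subsets closed under finite unions and under taking subsets; it is nontrivial if $I\ne\{\emptyset\}$ and $\mathbb{N}\times\mathbb{N}\notin I$. $y\in X$ is an $I$-cluster point of a double sequence $\{x_{ij}\}$ in $X$ if for every open $U\ni y$, $\{(m,n)\in\mathbb{N}\times\mathbb{N}: x_{mn}\in U\}\notin I$. *)

From Stdlib Require Import List.

Set Implicit Arguments.

Record topology (X : Type) := {
  is_open : (X -> Prop) -> Prop;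
  open_full : is_open (fun _ => True);
  open_empty : is_open (fun _ => False);
  open_union : forall F : (X -> Prop) -> Prop,
      (forall U, F U -> is_open U) ->
      is_open (fun x => exists U, F U /\ U x);
  open_inter : forall U V, is_open U -> is_open V ->
      is_open (fun x => U x /\ V x)
}.

Definition open_cover {X : Type} (t : topology X) (C : (X -> Prop) -> Prop) : Prop :=
  (forall U, C U -> is_open t U) /\ (forall x : X, exists U, C U /\ U x).

Definition subcover {X : Type} (C D : (X -> Prop) -> Prop) : Prop :=
  (forall U, D U -> C U) /\ (forall x : X, exists U, D U /\ U x).

Definition compact_space {X : Type} (t : topology X) : Prop :=
  forall C, open_cover t C ->
    exists l : list (X -> Prop),
      (forall U, In U l -> C U) /\ (forall x : X, exists U, In U l /\ U x).

Definition countable_family {X : Type} (D : (X -> Prop) -> Prop) : Prop :=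
  exists f : (X -> Prop) -> nat,
    forall U V, D U -> D V -> f U = f V -> U = V.

Definition lindelof_space {X : Type} (t : topology X) : Prop :=
  forall C, open_cover t C ->
    exists D, subcover C D /\ countable_family D.

Definition ideal_NN (I : ((nat * nat) -> Prop) -> Prop) : Prop :=
  (forall A B, I A -> I B -> I (fun p => A p \/ B p)) /\
  (forall A B, I A -> (forall p, B p -> A p) -> I B).

Definition nontrivial_ideal_NN (I : ((nat * nat) -> Prop) -> Prop) : Prop :=
  ideal_NN I /\
  (exists A, I A /\ exists p, A p) /\
  ~ I (fun _ => True).

Definition finite_nat (H : nat -> Prop) : Prop :=
  exists l : list nat, forall n, H n -> In n l.

Definition I_cluster_point {X : Type} (t : topology X)
    (I : ((nat * nat) -> Prop) -> Prop) (x : nat -> nat -> X) (y : X) : Prop :=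
  forall U, is_open t U -> U y -> ~ I (fun p => U (x (fst p) (snd p))).

From Stdlib Require Import Arith List Classical ClassicalEpsilon Lia.

(* Enumerate a countable subcover as U_0, U_1, ... (indices given by the
   injection into nat).  If no finite subcover existed, one could pick x_m
   outside U_0, ..., U_(m-1) for every m.  The double sequence x_(m,n) := x_m
   has an I-cluster point y, lying in some U_k; but x_m can only be in U_k for
   m <= k, so {(m,n) | x_m in U_k} is contained in {0..k} x N, which is in I. *)

Lemma countable_family_initial_segment {X : Type}
  (D : (X -> Prop) -> Prop) (f : (X -> Prop) -> nat)
  (hf : forall U V, D U -> D V -> f U = f V -> U = V) (n : nat) :
  exists l : list (X -> Prop),
    (forall U, In U l -> D U) /\ (forall U, D U -> f U < n -> In U l).
Proof.
  induction n as [|n [l [Hl_in_D Hl_complete]]].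
  - exists nil. split; [intros U [] | intros; lia].
  - destruct (classic (exists V, D V /\ f V = n)) as [[V [HDV HfV]] | Hnone].
    + exists (V :: l). split.
      * intros U [<- | HU]; auto.
      * intros U HDU HfU. destruct (Nat.eq_dec (f U) n).
        -- left. symmetry. apply hf; auto; congruence.
        -- right. apply Hl_complete; auto; lia.
    + exists l. split; auto.
      intros U HDU HfU. destruct (Nat.eq_dec (f U) n).
      * exfalso. apply Hnone. eauto.
      * apply Hl_complete; auto; lia.
Qed.

Lemma escaping_sequence_of_no_finite_subcover {X : Type}
  (C D : (X -> Prop) -> Prop) (f : (X -> Prop) -> nat)
  (hDC : forall U, D U -> C U)
  (hf : forall U V, D U -> D V -> f U = f V -> U = V)
  (hnofin : ~ exists l : list (X -> Prop),
      (forall U, In U l -> C U) /\ (forall x : X, exists U, In U l /\ U x)) :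
  exists s : nat -> X, forall n U, D U -> f U < n -> ~ U (s n).
Proof.
  assert (Hmiss : forall n, exists x : X, forall U, D U -> f U < n -> ~ U x).
  { intros n. apply NNPP. intros Hcovered. apply hnofin.
    destruct (countable_family_initial_segment D f hf n) as [l [Hl_in_D Hl_complete]].
    exists l. split.
    - intros U HU. apply hDC, Hl_in_D, HU.
    - intros x. apply NNPP. intros Hx. apply Hcovered. exists x.
      intros U HDU HfU HUx. apply Hx. exists U. split; auto. }
  exists (fun n => proj1_sig (constructive_indefinite_description _ (Hmiss n))).
  intros n. exact (proj2_sig (constructive_indefinite_description _ (Hmiss n))).
Qed.

Lemma ideal_initial_rows (I : ((nat * nat) -> Prop) -> Prop)
  (hI : ideal_NN I)
  (hfin : forall H : nat -> Prop, finite_nat H -> I (fun p => H (fst p)))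
  (k : nat) (A : (nat * nat) -> Prop)
  (hA : forall p, A p -> fst p <= k) :
  I A.
Proof.
  apply (proj2 hI (fun p => fst p <= k)); [|exact hA].
  apply (hfin (fun m => m <= k)).
  exists (seq 0 (S k)). intros m Hm. apply in_seq. lia.
Qed.

Theorem theorem4p3 (I : ((nat * nat) -> Prop) -> Prop)
  (hI : nontrivial_ideal_NN I)
  (hfin : forall H : nat -> Prop, finite_nat H -> I (fun p => H (fst p)))
  (X : Type) (t : topology X)
  (hL : lindelof_space t)
  (hcl : forall x : nat -> nat -> X, exists y, I_cluster_point t I x y) :
  compact_space t.
Proof.
  intros C HC.
  destruct (hL C HC) as [D [[HDC HDcov] [f hf]]].
  apply NNPP. intros Hnofin.
  destruct (escaping_sequence_of_no_finite_subcover C D f HDC hf Hnofin)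
    as [s Hs].
  destruct (hcl (fun m _ => s m)) as [y Hy].
  destruct (HDcov y) as [U [HDU HUy]].
  apply (Hy U (proj1 HC U (HDC U HDU)) HUy).
  apply (ideal_initial_rows I (proj1 hI) hfin (f U)).
  intros [m n] HUm. simpl in *.
  destruct (Nat.le_gt_cases m (f U)) as [Hle | Hgt]; auto.
  exfalso. exact (Hs m U HDU Hgt HUm).
Qed.
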